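(* Let $(X_i,A_i,Y_i)_{1\le i\le n}$ be random with $X_i\in\mathcal X$, $A_i\in\{0,1\}$, $Y_i\in\mathcal Y$, let $X'_1,\dots,X'_M$ be the distinct values of $X_1,\dots,X_n$ and $I_k=\{i:X_i=X'_k\}$. Suppose that, conditionally on $(X_{1:n},A_{1:n})$, the joint distribution of $(Y_1,\dots,Y_n)$ is invariant under every permutation of $[n]$ mapping each $I_k$ to itself. For all $x\in\mathcal X$ define (when $N^{(0)}\ge1$) $$\hat C^2(x)=\Big\{y\in\mathcal Y: s(x,y)\le Q_{1-\alpha^2}\Big(\sum_{k=1}^M\sum_{i\in I_k}\frac{N_k^0}{(N^{(0)})^2N_k}\delta_{\bar S_i}+\sum_{k=1}^M\sum_{\substack{i,j\in I_k\\ i\ne j}}\frac{N_k^0(N_k^0-1)}{(N^{(0)})^2N_k(N_k-1)}\delta_{\min\{\bar S_i,\bar S_j\}}+\sum_{1\le k\ne k'\le M}\sum_{i\in I_k}\sum_{j\in I_{k'}}\frac{N_k^0N_{k'}^0}{(N^{(0)})^2N_kN_{k'}}\delta_{\min\{\bar S_i,\bar S_j\}}\Big)\Big\},$$ with $\frac{N_k^0(N_k^0-1)}{N_k(N_k-1)}:=0$ when $N_k=1$. Then $$\mathbb E\Big[\Big(\frac{1}{N^{(0)}}\sum_{i\in I_{A=0}}\mathbf 1\{Y_i\notin\hat C^2(X_i)\}\Big)^2\ \Big|\ X_{1:n},A_{1:n}\Big]\le\alpha^2.$$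
   Context: $Y_i$ is observed only when $A_i=1$. $s:\mathcal X\times\mathcal Y\to\mathbb R$ is a fixed measurable score, $S_i=s(X_i,Y_i)$, and $\bar S_i=S_i$ if $A_i=1$, $\bar S_i=+\infty$ if $A_i=0$. $I_{A=0}=\{i:A_i=0\}$, $N^{(0)}=|I_{A=0}|$; $N_k=|I_k|$, $N_k^0=|\{i\in I_k:A_i=0\}|$. $Q_{1-\beta}(P)=\inf\{t:\mathbb P_{T\sim P}(T\le t)\ge1-\beta\}$ for a distribution $P$ on $\mathbb R\cup\{+\infty\}$; $\delta_v$ is a point mass. The miscoverage proportion $\frac{1}{N^{(0)}}\sum_{i\in I_{A=0}}\mathbf 1\{Y_i\notin\hat C^2(X_i)\}$ is defined as $0$ when $N^{(0)}=0$. *)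

From HB Require Import structures.
From mathcomp Require Import all_boot all_order all_algebra.
From mathcomp Require Import all_classical all_reals all_analysis.
From mathcomp Require Import perm.
Set Implicit Arguments. Unset Strict Implicit. Unset Printing Implicit Defensive.
Import Order.TTheory GRing.Theory Num.Theory.
Local Open Scope classical_set_scope.
Local Open Scope ring_scope.

Section Defs.
Variable R : realType.

(* Q_q of the discrete distribution  sum_i w i * delta_(v i)  on R ∪ {+oo}:
   inf { t : P_{T ~ P}(T <= t) >= q }.  Used with q = 1 - alpha^2. *)
Definition wquantile (I : finType) (w : I -> R) (v : I -> \bar R) (q : R) : \bar R :=
  ereal_inf [set t : \bar R | q <= \sum_(i : I) w i * ((v i <= t)%E)%:R].

Variables (n : nat) (Xt : Type) (X : 'I_n -> Xt) (A : 'I_n -> bool).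
(* A i = true means A_i = 1 (label observed); A i = false means A_i = 0. *)

Definition sameblk (i j : 'I_n) : bool := `[< X i = X j >].

Definition Nblk (i : 'I_n) : nat := #|[set j | sameblk i j]|.
Definition N0blk (i : 'I_n) : nat := #|[set j | sameblk i j && ~~ A j]|.
Definition Nzero : nat := #|[set j | ~~ A j]|.

(* weight of the point mass delta_(min(Sbar_i, Sbar_j)) in the distribution
   defining hat C^2 (ordered pairs (i,j); i = j gives delta_(Sbar_i)) *)
Definition wpair (ij : 'I_n * 'I_n) : R :=
  let i := ij.1 in let j := ij.2 in
  let N0 : R := (Nzero%:R) in
  if i == j then (N0blk i)%:R / (N0 ^+ 2 * (Nblk i)%:R)
  else if sameblk i j then
    (if Nblk i == 1%N then 0
     else (N0blk i)%:R * ((N0blk i)%:R - 1)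
          / (N0 ^+ 2 * (Nblk i)%:R * ((Nblk i)%:R - 1)))
  else (N0blk i)%:R * (N0blk j)%:R / (N0 ^+ 2 * (Nblk i)%:R * (Nblk j)%:R).

Variables (Yt : Type) (s : Xt -> Yt -> R).

Definition Sbar (y : 'I_n -> Yt) (i : 'I_n) : \bar R :=
  if A i then (s (X i) (y i))%:E else +oo%E.

Definition Chat2 (alpha : R) (y : 'I_n -> Yt) (x : Xt) : set Yt :=
  [set yy | ((s x yy)%:E <=
     wquantile wpair (fun ij => Order.min (Sbar y ij.1) (Sbar y ij.2))
               (1 - alpha ^+ 2))%E].

Definition miscov (alpha : R) (y : 'I_n -> Yt) : R :=
  if Nzero == 0%N then 0
  else (Nzero%:R)^-1 *
       \sum_(i < n | ~~ A i) (`[< ~ Chat2 alpha y (X i) (y i) >])%:R.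

End Defs.

(* sigma-algebra on 'I_n -> Yt generated by the coordinate cylinders
   (the product sigma-algebra on Y^n) *)
Definition prod_meas (n : nat) (dY : measure_display) (Yt : measurableType dY)
  : set (set ('I_n -> Yt)) :=
  <<s [set C | exists (i : 'I_n) (B : set Yt),
                 measurable B /\ C = (fun f : 'I_n -> Yt => f i) @^-1` B] >>.

Definition block_perm (n : nat) (Xt : Type) (X : 'I_n -> Xt) (sg : {perm 'I_n}) :=
  forall i, X (sg i) = X i.

From HB Require Import structures.
From mathcomp Require Import all_boot all_order all_algebra.
From mathcomp Require Import all_classical all_reals all_analysis.
From mathcomp Require Import perm measurable_realfun.
Set Implicit Arguments. Unset Strict Implicit. Unset Printing Implicit Defensive.
Import Order.TTheory GRing.Theory Num.Theory.
Local Open Scope classical_set_scope.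
Local Open Scope ring_scope.

(* Expanding the square, miscov^2 is at most the sum, over ordered pairs (i, j) of
   unlabelled points, of [(N^(0))^-2] times the indicator that both are miscovered.
   If both are, the quantile defining hat C^2 lies strictly below
   m_ij = min(s(X_i, Y_i), s(X_j, Y_j)), so at least 1 - alpha^2 of the mass of the
   pair minima lies strictly below m_ij (replacing the +oo entries of Sbar by true
   scores only moves mass down).  By block exchangeability the probability of this
   event depends only on the pattern of (i, j) -- the blocks of i and j and whether
   i = j -- and averaging the weights (N^(0))^-2 over patterns gives exactly the
   weights of hat C^2.  Finally, for any probability weights w, the w-mass of the
   pairs p having at least 1 - alpha^2 of the mass strictly below m_p is at most
   alpha^2, since all of them lie at or above the smallest such m_p. *)

Section MassBelow.
Variables (R : realType) (I : finType) (w : I -> R).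
Hypothesis w_ge0 : forall i, 0 <= w i.

Definition mass_below (v : I -> R) (x : R) : R := \sum_i w i * (v i < x)%R%:R.

Lemma mass_below_wquantile_lt (u : I -> R) (v : I -> \bar R) q x :
  (forall i, ((u i)%:E <= v i)%E) -> (wquantile w v q < x%:E)%E ->
  q <= mass_below u x.
Proof.
move=> uv /ereal_inf_lt[t /= qt tx]; apply: le_trans qt _.
apply: ler_sum => i _; apply: ler_wpM2l => //.
have [vt|] := boolP (v i <= t)%E; last by rewrite ler0n.
by have := le_lt_trans (le_trans (uv i) vt) tx; rewrite lte_fin => ->.
Qed.

Hypothesis w_sum1 : \sum_i w i = 1.

Lemma sum_mass_below_ge_le (v : I -> R) q : q <= 1 ->
  \sum_i w i * (q <= mass_below v (v i))%R%:R <= 1 - q.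
Proof.
move=> q_le1.
have [i0 Ei0|noE] := pickP (fun i => q <= mass_below v (v i)); last first.
  by rewrite big1 ?subr_ge0 // => i _; rewrite noE mulr0.
have [i1 Ei1 i1_min] := @arg_minP _ _ _ i0 (fun i => q <= mass_below v (v i)) v Ei0.
(* [i1] minimises [v] over the counted indices, so the left side is at most
   [1 - mass_below v (v i1) <= 1 - q]. *)
apply: le_trans (_ : \sum_i w i * (1 - (v i < v i1)%R%:R) <= _).
  apply: ler_sum => i _; apply: ler_wpM2l => //.
  have [Ei|_] := boolP (q <= mass_below v (v i)).
    by rewrite ltNge i1_min // subr0.
  by rewrite subr_ge0 lern1 leq_b1.
under eq_bigr do rewrite mulrBr mulr1.
by rewrite sumrB w_sum1 lerB.
Qed.

End MassBelow.

Lemma measurable_fun_mass_below (R : realType) d (T : measurableType d) (I : finType)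
    (w : I -> R) (f : I -> T -> R) (g : T -> R) :
  (forall i, measurable_fun setT (f i)) -> measurable_fun setT g ->
  measurable_fun setT (fun t => mass_below w (f ^~ t) (g t)).
Proof.
move=> mf mg; apply: measurable_sum => i.
rewrite (_ : (fun t => _) = fun t => if f i t < g t then w i else 0); last first.
  by apply/funext => t; case: (_ < _); rewrite ?mulr1 ?mulr0.
by apply: measurable_fun_ifT => //; exact: measurable_fun_ltr.
Qed.

Section ClassAverage.
Variables (R : numFieldType) (I : finType) (e : rel I).
Hypotheses (e_refl : reflexive e) (e_sym : symmetric e) (e_trans : transitive e).

Definition class_avg (c : I -> R) (r : I) : R :=
  (\sum_(p | e r p) c p) / #|e r|%:R.

Lemma card_class_eq r p : e r p -> #|e r| = #|e p|.
Proof.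
move=> erp; apply: eq_card => u; rewrite !unfold_in.
by apply/idP/idP; apply: e_trans; rewrite // e_sym.
Qed.

Lemma class_avg_eq c r p : e r p -> class_avg c r = class_avg c p.
Proof.
move=> erp; rewrite /class_avg (card_class_eq erp); congr (_ / _).
by apply: eq_bigl => u; apply/idP/idP; apply: e_trans; rewrite // e_sym.
Qed.

Lemma class_avg_ge0 c r : (forall p, 0 <= c p) -> 0 <= class_avg c r.
Proof. by move=> c0; rewrite divr_ge0 ?sumr_ge0. Qed.

Lemma sum_class_avg (c g : I -> R) : (forall p r, e p r -> g p = g r) ->
  \sum_r class_avg c r * g r = \sum_p c p * g p.
Proof.
move=> g_class.
have class_gt0 p : (0 < #|e p|)%N by apply/card_gt0P; exists p; rewrite unfold_in.
transitivity (\sum_r \sum_(p | e r p) c p * g p / #|e p|%:R).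
  apply: eq_bigr => r _; rewrite /class_avg !mulr_suml /=.
  apply: eq_bigr => p erp; rewrite (card_class_eq erp) (g_class r p erp).
  by rewrite mulrAC.
rewrite (exchange_big_dep predT) //=; apply: eq_bigr => p _.
rewrite (eq_bigl (fun r => r \in e p)) => [|r]; last by rewrite unfold_in e_sym.
by rewrite sumr_const -(mulr_natr (_ / _)) divfK // pnatr_eq0 -lt0n.
Qed.

End ClassAverage.

Lemma sum_diag (R : pzSemiRingType) (I : finType) (F : I -> I -> R) :
  \sum_i \sum_j (i == j)%:R * F i j = \sum_i F i i.
Proof.
apply: eq_bigr => i _; rewrite (bigD1 i) //= eqxx mul1r big1 ?addr0 //.
by move=> j /negbTE; rewrite eq_sym => ->; rewrite mul0r.
Qed.

Lemma sum_offdiag (R : pzRingType) (I : finType) (F : I -> I -> R) :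
  \sum_i \sum_j (i != j)%:R * F i j = \sum_i \sum_j F i j - \sum_i F i i.
Proof.
rewrite -sum_diag -sumrB; apply: eq_bigr => i _; rewrite -sumrB.
by apply: eq_bigr => j _; case: eqP; rewrite ?(mul0r, mul1r, subr0, subrr).
Qed.

Section NonnegIntegral.
Local Open Scope ereal_scope.
Variables (R : realType) (d : measure_display) (T : measurableType d).
Variable mu : {measure set T -> \bar R}.

(* No measurability is needed: the integral of a nonnegative function is the
   supremum of the integrals of the simple functions below it. *)
Lemma ge0_le_integral_nonmeasurable (f g : T -> \bar R) :
  (forall t, 0 <= f t) -> (forall t, f t <= g t) ->
  \int[mu]_t f t <= \int[mu]_t g t.
Proof.
move=> f0 fg; have g0 t : 0 <= g t := le_trans (f0 t) (fg t).
rewrite !ge0_integralTE //; apply: le_ereal_sup => _ [h /= hf <-].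
by exists h => // t; exact: le_trans (hf t) (fg t).
Qed.

Lemma integral_sum_indic (I : finType) (c : I -> R) (B : I -> set T) :
  (forall i, (0 <= c i)%R) -> (forall i, measurable (B i)) ->
  \int[mu]_t (\sum_i c i * \1_(B i) t)%R%:E = \sum_i (c i)%:E * mu (B i).
Proof.
move=> c0 mB; under eq_integral do rewrite -sumEFin.
rewrite ge0_integral_sum //; last 2 first.
- by move=> i; apply/measurable_EFinP/measurable_funM => //; exact: measurable_indic.
- by move=> i t _; rewrite lee_fin mulr_ge0.
apply: eq_bigr => i _; under eq_integral do rewrite EFinM.
rewrite ge0_integralZl_EFin //; last exact/measurable_EFinP/measurable_indic.
by rewrite integral_indic // setIT.
Qed.

End NonnegIntegral.

Section Blocks.
Variables (R : realType) (n : nat) (Xt : Type) (X : 'I_n -> Xt) (A : 'I_n -> bool).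
Local Notation sb := (sameblk X).

Lemma sameblk_refl : reflexive sb.
Proof. by move=> i; apply/asboolP. Qed.

Lemma sameblk_sym : symmetric sb.
Proof. by move=> i j; apply/asboolP/asboolP. Qed.

Lemma sameblk_trans : transitive sb.
Proof. by move=> j i k /asboolP eij /asboolP ejk; apply/asboolP; rewrite eij. Qed.

Definition same_pattern (p r : 'I_n * 'I_n) : bool :=
  [&& sb p.1 r.1, sb p.2 r.2 & (p.1 == p.2) == (r.1 == r.2)].

Lemma same_pattern_refl : reflexive same_pattern.
Proof. by move=> p; rewrite /same_pattern !sameblk_refl eqxx. Qed.

Lemma same_pattern_sym : symmetric same_pattern.
Proof. by move=> p r; rewrite /same_pattern sameblk_sym [sb p.2 _]sameblk_sym eq_sym. Qed.

Lemma same_pattern_trans : transitive same_pattern.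
Proof.
move=> r p u /and3P[p1 p2 /eqP e1] /and3P[r1 r2 /eqP e2].
by rewrite /same_pattern (sameblk_trans p1 r1) (sameblk_trans p2 r2) e1 e2 eqxx.
Qed.

Definition blk_mass (P : pred 'I_n) (k : 'I_n) : R := \sum_j (sb k j && P j)%:R.

Lemma natr_card_sum (P : pred 'I_n) : #|[set j | P j]|%:R = \sum_j (P j)%:R :> R.
Proof.
rewrite -natr_sum -sum1_card big_mkcond /=; congr _%:R; apply: eq_bigr => j _.
have [Pj|nPj] := boolP (P j); first by rewrite mem_set.
by rewrite memNset //; apply/negP.
Qed.

Lemma pattern_mass (P : pred 'I_n) k l :
  \sum_(p | same_pattern (k, l) p) (P p.1 && P p.2)%:R =
  if k == l then blk_mass P k
  else if sb k l then blk_mass P k * (blk_mass P k - 1)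
  else blk_mass P k * blk_mass P l.
Proof.
pose a m i : R := (sb m i && P i)%:R.
have a_idem m i : a m i * a m i = a m i by rewrite /a; case: (_ && _); rewrite ?mulr1 ?mulr0.
transitivity (\sum_i \sum_j ((i == j) == (k == l))%:R * (a k i * a l j)).
  rewrite pair_bigA big_mkcond /=; apply: eq_bigr => -[i j] _.
  rewrite /same_pattern /a /= [(k == l) == _]eq_sym.
  by case: (sb k i); case: (sb l j); case: (P i); case: (P j); case: (i == j); case: (k == l);
    rewrite /= ?(mulr0, mul0r, mulr1).
have [<-|kl] := eqVneq k l.
  by under eq_bigr do under eq_bigr do rewrite eqb_id; rewrite sum_diag; apply: eq_bigr.
under eq_bigr do under eq_bigr do rewrite eqbF_neg.
rewrite sum_offdiag -big_distrlr; case: ifP => [kl_sb|nkl].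
  have al j : a l j = a k j.
    by rewrite /a; congr (_ && _)%:R; apply/idP/idP; apply: sameblk_trans; rewrite // sameblk_sym.
  under [X in _ - X]eq_bigr do rewrite al a_idem.
  by under [X in _ * X - _]eq_bigr do rewrite al; rewrite mulrBr mulr1.
rewrite [X in _ - X]big1 ?subr0 // => i _; rewrite /a.
have [ki|] := boolP (sb k i); last by rewrite mul0r.
have [li|] := boolP (sb l i); last by rewrite mulr0.
by move: nkl; rewrite (sameblk_trans ki (_ : sb i l)) // sameblk_sym.
Qed.

Lemma natr_Nblk k : (Nblk X k)%:R = blk_mass predT k.
Proof. by rewrite natr_card_sum; apply: eq_bigr => j _; rewrite andbT. Qed.

Lemma natr_N0blk k : (N0blk X A k)%:R = blk_mass (fun j => ~~ A j) k.
Proof. exact: natr_card_sum. Qed.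

Definition unlab_wpair (p : 'I_n * 'I_n) : R :=
  (~~ A p.1 && ~~ A p.2)%:R / (Nzero A)%:R ^+ 2.

Lemma unlab_wpair_ge0 p : 0 <= unlab_wpair p.
Proof. by rewrite divr_ge0 ?exprn_ge0. Qed.

Lemma wpair_class_avg r : wpair R X A r = class_avg same_pattern unlab_wpair r.
Proof.
case: r => k l; rewrite /class_avg -mulr_suml.
have -> : #|same_pattern (k, l)|%:R =
    \sum_(p | same_pattern (k, l) p) (predT p.1 && predT p.2)%:R :> R.
  by rewrite -sum1_card natr_sum; apply: eq_bigl => p; rewrite unfold_in.
rewrite (pattern_mass (fun j => ~~ A j)) pattern_mass /wpair /= !natr_N0blk !natr_Nblk.
have divM3 (x a b c : R) : x / (a * b * c) = x / a / (b * c).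
  by rewrite -(mulrA a) invfM mulrA.
have [_|kl] := eqVneq k l; first by rewrite invfM mulrA.
case: ifP => _; last exact: divM3.
case: eqP => [Nk1|_]; last exact: divM3.
by rewrite -natr_Nblk Nk1 subrr !mulr0 invr0 mulr0.
Qed.

Lemma wpair_ge0 r : 0 <= wpair R X A r.
Proof. by rewrite wpair_class_avg class_avg_ge0 //; exact: unlab_wpair_ge0. Qed.

Lemma sum_wpair_class_inv (g : 'I_n * 'I_n -> R) :
  (forall p r, same_pattern p r -> g p = g r) ->
  \sum_r wpair R X A r * g r = \sum_p unlab_wpair p * g p.
Proof.
move=> g_class; under eq_bigr do rewrite wpair_class_avg.
exact: (sum_class_avg same_pattern_refl same_pattern_sym same_pattern_trans _ g_class).
Qed.

Lemma sum_wpair : Nzero A != 0%N -> \sum_r wpair R X A r = 1.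
Proof.
move=> N0; have := @sum_wpair_class_inv (fun _ => 1) (fun _ _ _ => erefl).
under eq_bigr do rewrite mulr1; move=> ->.
under eq_bigr do rewrite mulr1; rewrite /unlab_wpair -mulr_suml.
have -> : \sum_p (~~ A p.1 && ~~ A p.2)%:R = (Nzero A)%:R ^+ 2 :> R.
  rewrite natr_card_sum expr2 big_distrlr pair_bigA /=.
  by apply: eq_bigr => -[i j] _; case: (A i); case: (A j); rewrite /= ?(mulr0, mul0r, mulr1).
by rewrite divff // expf_neq0 // pnatr_eq0.
Qed.

Lemma same_pattern_block_perm (sg : {perm 'I_n}) p :
  block_perm X sg -> same_pattern p (sg p.1, sg p.2).
Proof.
move=> sgX; rewrite /same_pattern /= (inj_eq perm_inj) eqxx andbT.
by apply/andP; split; apply/asboolP; rewrite sgX.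
Qed.

Lemma wpair_block_perm (sg : {perm 'I_n}) p :
  block_perm X sg -> wpair R X A (sg p.1, sg p.2) = wpair R X A p.
Proof.
move=> sgX; rewrite !wpair_class_avg; apply/esym.
exact: (class_avg_eq same_pattern_sym same_pattern_trans _ (same_pattern_block_perm p sgX)).
Qed.

Lemma block_perm_tperm i j : sb i j -> block_perm X (tperm i j).
Proof. by move=> /asboolP Xij k; case: tpermP => // ->. Qed.

Lemma same_pattern_block_permP p r : same_pattern p r ->
  exists2 sg : {perm 'I_n}, block_perm X sg & (sg p.1, sg p.2) = r.
Proof.
case: p r => k l [i j] /and3P[/= ki lj /eqP kl_ij].
pose t := tperm k i; have tX : block_perm X t by exact: block_perm_tperm.
have tl_j : sb (t l) j by apply/asboolP; rewrite tX; apply/asboolP.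
exists (t * tperm (t l) j)%g; first by move=> x; rewrite permM (block_perm_tperm tl_j) tX.
rewrite !permM tpermL; congr pair; last exact: tpermL.
have tk : t k = i by rewrite tpermL.
move: kl_ij; have [<-|kl] := eqVneq k l => /esym; first by move=> /eqP <-; rewrite tk tpermL.
move=> /negbT ij; have tl_i : t l != i by rewrite -tk (inj_eq perm_inj) eq_sym.
by rewrite tpermD // eq_sym.
Qed.

End Blocks.

Section Scores.
Variables (R : realType) (n : nat) (Xt Yt : Type) (X : 'I_n -> Xt) (A : 'I_n -> bool).
Variables (s : Xt -> Yt -> R) (alpha : R).
Local Notation w := (wpair R X A).

Definition pair_min (y : 'I_n -> Yt) (p : 'I_n * 'I_n) : R :=
  Order.min (s (X p.1) (y p.1)) (s (X p.2) (y p.2)).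

Definition above_quantile (y : 'I_n -> Yt) (p : 'I_n * 'I_n) : bool :=
  1 - alpha ^+ 2 <= mass_below w (pair_min y) (pair_min y p).

Lemma score_le_Sbar y i : ((s (X i) (y i))%:E <= Sbar X A s y i)%E.
Proof. by rewrite /Sbar; case: (A i); rewrite ?leey. Qed.

Lemma miscovered_pair_above_quantile y i j :
  ~ Chat2 X A s alpha y (X i) (y i) -> ~ Chat2 X A s alpha y (X j) (y j) ->
  above_quantile y (i, j).
Proof.
rewrite /Chat2 /= => /negP; rewrite -ltNge => Qi /negP; rewrite -ltNge => Qj.
apply: (mass_below_wquantile_lt (@wpair_ge0 _ _ _ X A)
  (v := fun r => Order.min (Sbar X A s y r.1) (Sbar X A s y r.2))) => [r|].
  by rewrite /pair_min EFin_min le_min2 ?score_le_Sbar.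
by rewrite /pair_min EFin_min lt_min Qi Qj.
Qed.

Lemma sqr_miscov_le y : Nzero A != 0%N ->
  miscov X A s alpha y ^+ 2 <= \sum_p unlab_wpair R A p * (above_quantile y p)%:R.
Proof.
move=> N0; rewrite /miscov (negbTE N0).
pose m i : R := (`[< ~ Chat2 X A s alpha y (X i) (y i) >])%:R.
have -> : \sum_(i | ~~ A i) m i = \sum_i (~~ A i)%:R * m i.
  by rewrite big_mkcond; apply: eq_bigr => i _; case: (A i); rewrite ?mul0r ?mul1r.
rewrite expr2 mulrACA -invfM -expr2 mulr_suml; under eq_bigr do rewrite mulr_sumr.
rewrite pair_bigA mulr_sumr; apply: ler_sum => -[i j] _.
have m_above : m i * m j <= (above_quantile y (i, j))%:R.
  rewrite /m -natrM ler_nat; case: asboolP => mi; case: asboolP => mj; rewrite ?muln0 //.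
  by rewrite (miscovered_pair_above_quantile mi mj).
rewrite /unlab_wpair /= [X in _ <= X]mulrAC [X in _ <= X]mulrC.
rewrite ler_wpM2l ?invr_ge0 ?exprn_ge0 // mulrACA.
by case: (A i); case: (A j); rewrite /= ?(mulr1n, mulr0n, mul0r, mul1r, lexx).
Qed.

Lemma sum_wpair_above_quantile_le y : Nzero A != 0%N ->
  \sum_r w r * (above_quantile y r)%:R <= alpha ^+ 2.
Proof.
move=> N0; have := sum_mass_below_ge_le (@wpair_ge0 _ _ _ X A) (sum_wpair R X N0) (pair_min y).
by move/(_ (1 - alpha ^+ 2)); rewrite gerBl sqr_ge0 subKr; apply.
Qed.

Lemma above_quantile_block_perm (sg : {perm 'I_n}) y p : block_perm X sg ->
  above_quantile (fun a => y (sg a)) p = above_quantile y (sg p.1, sg p.2).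
Proof.
move=> sgX; pose f (r : 'I_n * 'I_n) := (sg r.1, sg r.2).
have f_inj : injective f by move=> [a b] [c d] [/perm_inj -> /perm_inj ->].
have pmin r : pair_min (fun a => y (sg a)) r = pair_min y (f r) by rewrite /pair_min !sgX.
rewrite /above_quantile /mass_below [in RHS](reindex_inj f_inj) pmin.
by congr (_ <= _); apply: eq_bigr => r _; rewrite pmin wpair_block_perm.
Qed.

End Scores.

Section Measurability.
Variables (R : realType) (n : nat) (dX : measure_display) (Xt : measurableType dX).
Variables (dY : measure_display) (Yt : measurableType dY) (s : Xt -> Yt -> R).
Hypothesis ms : measurable_fun setT (fun p : Xt * Yt => s p.1 p.2).
Variables (alpha : R) (X : 'I_n -> Xt) (A : 'I_n -> bool).

Lemma measurable_above_quantile d (T : measurableType d) (Z : 'I_n -> T -> Yt) p :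
  (forall a, measurable_fun setT (Z a)) ->
  measurable [set t | above_quantile X A s alpha (Z ^~ t) p].
Proof.
move=> mZ.
have mscore a : measurable_fun setT (fun t => s (X a) (Z a t)).
  exact: measurableT_comp ms (measurable_fun_pair (measurable_cst _) (mZ a)).
have mmin r : measurable_fun setT (fun t => pair_min X s (Z ^~ t) r).
  exact: measurable_minr (mscore r.1) (mscore r.2).
have := measurable_fun_ler (measurable_cst (1 - alpha ^+ 2))
  (measurable_fun_mass_below (wpair R X A) mmin (mmin p)) measurableT (_ : measurable [set true]).
by rewrite setTI; apply.
Qed.

Lemma prod_meas_above_quantile p : prod_meas [set y | above_quantile X A s alpha y p].
Proof.
pose cyl := [set C | exists (i : 'I_n) (B : set Yt),
  measurable B /\ C = (fun f : 'I_n -> Yt => f i) @^-1` B].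
apply: (@measurable_above_quantile _ (g_sigma_algebraType cyl) (fun a f => f a)).
by move=> a _ B mB; rewrite setTI; apply: sub_sigma_algebra; exists a, B.
Qed.

End Measurability.

Section Exchangeability.
Variables (R : realType) (n : nat) (dX : measure_display) (Xt : measurableType dX).
Variables (dY : measure_display) (Yt : measurableType dY) (s : Xt -> Yt -> R).
Hypothesis ms : measurable_fun setT (fun p : Xt * Yt => s p.1 p.2).
Variables (alpha : R) (X : 'I_n -> Xt) (A : 'I_n -> bool).
Variables (d : measure_display) (Omega : measurableType d) (P : probability Omega R).
Variable Y : 'I_n -> Omega -> Yt.
Hypothesis mY : forall i, measurable_fun setT (Y i).
Hypothesis exchY : forall sg : {perm 'I_n}, block_perm X sg ->
  forall E : set ('I_n -> Yt), prod_meas E ->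
    P ((fun w => fun i => Y i w) @^-1` E) = P ((fun w => fun i => Y (sg i) w) @^-1` E).

Let B p := [set w | above_quantile X A s alpha (Y ^~ w) p].

Let mB p : measurable (B p). Proof. exact: measurable_above_quantile. Qed.

Lemma prob_above_quantile_same_pattern p r : same_pattern X p r -> P (B p) = P (B r).
Proof.
case/same_pattern_block_permP => sg sgX <-.
rewrite [LHS](exchY sgX (prod_meas_above_quantile ms alpha X A p)); congr (P _).
by apply/seteqP; split => w; rewrite /B /= (above_quantile_block_perm A s alpha (Y ^~ w)).
Qed.

Lemma sum_unlab_wpair_prob :
  (\sum_p (unlab_wpair R A p)%:E * P (B p) = \sum_r (wpair R X A r)%:E * P (B r))%E.
Proof.
pose g p := fine (P (B p)).
have Pg p : P (B p) = (g p)%:E by rewrite /g fineK // fin_num_measure.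
under eq_bigr do rewrite Pg -EFinM; under [in RHS]eq_bigr do rewrite Pg -EFinM.
rewrite !sumEFin (@sum_wpair_class_inv _ _ _ X A g) // => p r pr.
by rewrite /g (prob_above_quantile_same_pattern pr).
Qed.

End Exchangeability.

Unset Implicit Arguments.

Theorem theorem4 (R : realType) (n : nat)
  (dX : measure_display) (Xt : measurableType dX)
  (dY : measure_display) (Yt : measurableType dY)
  (s : Xt -> Yt -> R)
  (hs : measurable_fun setT (fun p : Xt * Yt => s p.1 p.2))
  (alpha : R)
  (X : 'I_n -> Xt) (A : 'I_n -> bool)
  (d : measure_display) (Omega : measurableType d) (P : probability Omega R)
  (Y : 'I_n -> Omega -> Yt)
  (hY : forall i, measurable_fun setT (Y i))
  (hexch : forall sg : {perm 'I_n}, block_perm X sg ->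
     forall E : set ('I_n -> Yt), prod_meas E ->
       P ((fun w => fun i => Y i w) @^-1` E) =
       P ((fun w => fun i => Y (sg i) w) @^-1` E)) :
  ('E_P[fun w => (miscov X A s alpha (fun i => Y i w) ^+ 2)%R] <= (alpha ^+ 2)%:E)%E.
Proof.
rewrite unlock; have [N0|N0] := eqVneq (Nzero A) 0%N.
  under eq_integral do rewrite /miscov N0 eqxx expr2 mulr0.
  by rewrite integral0 lee_fin sqr_ge0.
pose B p := [set w | above_quantile X A s alpha (Y ^~ w) p].
have mB p : measurable (B p) by exact: measurable_above_quantile.
have indicB p w : \1_(B p) w = (above_quantile X A s alpha (Y ^~ w) p)%:R :> R.
  by rewrite indicE mem_setE.
apply: (@le_trans _ _ (\int[P]_w (\sum_p unlab_wpair R A p * \1_(B p) w)%:E)%E).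
  apply: ge0_le_integral_nonmeasurable => w; first by rewrite lee_fin sqr_ge0.
  by rewrite lee_fin; under eq_bigr do rewrite indicB; exact: sqr_miscov_le.
rewrite integral_sum_indic //; last exact: unlab_wpair_ge0.
rewrite (sum_unlab_wpair_prob hs) // -integral_sum_indic //; last exact: wpair_ge0.
apply: (@le_trans _ _ (\int[P]_w (cst (alpha ^+ 2)%:E) w)%E).
  apply: ge0_le_integral_nonmeasurable => w.
    by rewrite lee_fin sumr_ge0 // => r _; rewrite mulr_ge0 ?wpair_ge0 ?indic_ge0.
  by rewrite lee_fin; under eq_bigr do rewrite indicB; exact: sum_wpair_above_quantile_le.
by rewrite integral_cst // [X in (_ * X)%E](_ : _ = 1%E) ?mule1 //; exact: probability_setT.
Qed.
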